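(* Let $G=\{1,\rho\}\le S_n$ be a 2-element subgroup whose non-identity element $\rho$ is a product of pairwise disjoint transpositions. Then $B_n/G$ is a symmetric chain order.
   Context: A finite poset $P$ is ranked if it has a minimum element and all saturated chains from the minimum to any $x$ have the same length $r(x)$; $r(P)=\max_x r(x)$. A chain $x_1<\dots<x_k$ is symmetric if it is saturated and $r(x_1)+r(x_k)=r(P)$; a symmetric chain order (SCO) is a ranked poset that can be partitioned into symmetric chains. $B_n$ is the Boolean lattice of subsets of $[n]$; $S_n$ acts by $\sigma(A)=\sigma[A]$, and for $G\le S_n$, $B_n/G$ is the poset of $G$-orbits $[A]$ with $[A]\le[B]$ iff $X\subseteq Y$ for some $X\in[A]$, $Y\in[B]$. *)

From mathcomp Require Import all_boot all_order all_fingroup.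
Set Implicit Arguments. Unset Strict Implicit. Unset Printing Implicit Defensive.

Section RankedPosets.
Variables (T : finType) (le : rel T).

Definition plt (x y : T) : bool := le x y && (x != y).

Definition covers (x y : T) : bool :=
  plt x y && ~~ [exists z, plt x z && plt z y].

Definition is_rank_function (r : T -> nat) : Prop :=
  exists m : T, (forall y, le m y) /\
    forall (x : T) (p : seq T), path covers m p -> last m p = x -> size p = r x.

Definition ranked : Prop := exists r, is_rank_function r.

Definition poset_rank (r : T -> nat) : nat := \max_(x : T) r x.

Definition symmetric_chain (r : T -> nat) (x : T) (c : seq T) : bool :=
  path covers x c && (r x + r (last x c) == poset_rank r).

(* symmetric chain order: ranked, and partitioned into symmetric chains
   (chains given as nonempty sequences x :: c) *)
Definition SCO : Prop :=
  exists r, is_rank_function r /\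
    exists cs : seq (T * seq T),
      all (fun xc => symmetric_chain r xc.1 xc.2) cs /\
      perm_eq (flatten [seq xc.1 :: xc.2 | xc <- cs]) (enum T).
End RankedPosets.

Section Quotient.
Variables (n : nat) (G : {set {perm 'I_n}}).

Definition orbitB (A : {set 'I_n}) : {set {set 'I_n}} :=
  [set (fun i : 'I_n => s i) @: A | s : {perm 'I_n} in G].

Definition is_orbitB (X : {set {set 'I_n}}) : bool :=
  [exists A : {set 'I_n}, X == orbitB A].

Definition BquotT : finType := {X : {set {set 'I_n}} | is_orbitB X}.

Definition Bquot_le : rel BquotT :=
  fun X Y => [exists A in val X, exists B in val Y, A \subset B].
End Quotient.

Definition disjoint_transpositions_product (n : nat) (rho : {perm 'I_n}) : Prop :=
  exists s : seq ('I_n * 'I_n),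
    [/\ s != [::], all (fun p => p.1 != p.2) s,
        uniq (flatten [seq [:: p.1; p.2] | p <- s]) &
        rho = (\prod_(p <- s) tperm p.1 p.2)%g].

From mathcomp Require Import all_boot all_order all_fingroup.
From mathcomp Require Import zify.
Set Implicit Arguments. Unset Strict Implicit. Unset Printing Implicit Defensive.

(* Let A = {a_1, ..., a_k} and let F be the set of fixed points of rho.  The map
   U |-> (U :&: A, rho (U :&: rho A), U :&: F) is a rank-preserving isomorphism
   B_n ~ B(A) x B(A) x B(F), under which rho exchanges the first two coordinates;
   hence B_n / {1, rho} ~ (B(A) x B(A)) / swap x B(F).  Fix a symmetric chain
   decomposition c_1, ..., c_m of B(A) and list B(A) as c_1 ++ ... ++ c_m.  Each
   swap-orbit {(S, T), (T, S)} has exactly one representative with S listed no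
   later than T, and these representatives (the "half square") are covered by
   symmetric chains: the triangle {(x, y) | x <= y} over each c_i and the product
   c_i x c_j for i < j, both cut into hook-shaped chains.  Products of symmetric
   chain decompositions are again such decompositions, and Boolean lattices have
   one by induction, which gives the theorem. *)

Lemma uniq_flatten_key (T I : eqType) (key : T -> I) (ts : seq I) (ch : I -> seq T) :
  uniq ts -> (forall t, t \in ts -> uniq (ch t)) ->
  (forall t x, t \in ts -> x \in ch t -> key x = t) -> uniq (flatten (map ch ts)).
Proof.
elim: ts => [//|t ts IH] /= /andP[t_ts uts] uch key_ch.
rewrite cat_uniq uch ?mem_head // IH //; last first.
- by move=> t' x t'ts; apply: key_ch; rewrite inE t'ts orbT.
- by move=> t' t'ts; apply: uch; rewrite inE t'ts orbT.
rewrite andbT; apply/hasPn => x /flatten_mapP[t' t'ts xt']; apply/negP => xt.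
have := key_ch t x (mem_head _ _) xt.
have t'ts' : t' \in t :: ts by rewrite inE t'ts orbT.
have -> := key_ch t' x t'ts' xt'.
by move=> eqt; move: t_ts; rewrite -eqt t'ts.
Qed.

Lemma perm_flatten_fibres (T I : eqType) (key : T -> I) (ts : seq I) (ch : I -> seq T)
    (D : seq T) :
  uniq ts -> uniq D -> (forall t, t \in ts -> uniq (ch t)) ->
  (forall t x, t \in ts -> (x \in ch t) = (x \in D) && (key x == t)) ->
  (forall x, x \in D -> key x \in ts) ->
  perm_eq (flatten (map ch ts)) D.
Proof.
move=> uts uD uch mem_ch key_ts; apply: uniq_perm => //.
  apply: (uniq_flatten_key (key := key)) => // t x tts.
  by rewrite mem_ch // => /andP[_ /eqP].
move=> x; apply/flatten_mapP/idP => [[t tts] | xD].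
  by rewrite mem_ch // => /andP[].
by exists (key x); rewrite ?key_ts // mem_ch ?key_ts // xD eqxx.
Qed.

(* The list 0, 1, ..., k; locked so that simplification leaves it folded. *)
Definition upto (k : nat) : seq nat := locked (iota 0 k.+1).

Lemma mem_upto x k : (x \in upto k) = (x <= k).
Proof. by rewrite /upto -lock mem_iota. Qed.

Lemma upto_uniq k : uniq (upto k).
Proof. by rewrite /upto -lock iota_uniq. Qed.

Lemma map_nth_upto (T : Type) (x0 : T) (c : seq T) :
  0 < size c -> map (nth x0 c) (upto (size c).-1) = c.
Proof. by move=> c_gt0; rewrite /upto -lock prednK // -/(mkseq _ _) mkseq_nth. Qed.

(* Hooks
   give symmetric chain decompositions of the rectangle [0, a] x [0, b] and of the
   triangle {(p, q) | p <= q <= m}. *)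
Definition hook_pt (i0 j0 j1 k : nat) : nat * nat :=
  if k <= j1 - j0 then (i0, j0 + k) else (i0 + (k - (j1 - j0)), j1).

Definition hook (i0 j0 j1 i1 : nat) : seq (nat * nat) :=
  mkseq (hook_pt i0 j0 j1) (j1 - j0 + 1 + (i1 - i0)).

Lemma size_hook i0 j0 j1 i1 : size (hook i0 j0 j1 i1) = j1 - j0 + 1 + (i1 - i0).
Proof. exact: size_mkseq. Qed.

Lemma nth_hook i0 j0 j1 i1 x0 k : k < size (hook i0 j0 j1 i1) ->
  nth x0 (hook i0 j0 j1 i1) k = hook_pt i0 j0 j1 k.
Proof. by rewrite size_hook => k_lt; rewrite nth_mkseq. Qed.

Lemma mem_hook i0 j0 j1 i1 x : i0 <= i1 -> j0 <= j1 -> (x \in hook i0 j0 j1 i1) =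
  ((x.1 == i0) && (j0 <= x.2 <= j1)) || ((i0 < x.1 <= i1) && (x.2 == j1)).
Proof.
move=> le_i le_j; apply/mapP/idP => [[k] | ].
  by rewrite mem_iota /hook_pt => /andP[_ k_lt] ->; case: ifP => /= k_le; lia.
case: x => i j /= hx; case: (leqP i i0) => hi.
  exists (j - j0); first by rewrite mem_iota; lia.
  by rewrite /hook_pt ifT; [congr pair; lia | lia].
exists (j1 - j0 + (i - i0)); first by rewrite mem_iota; lia.
by rewrite /hook_pt ifF; [congr pair; lia | lia].
Qed.

Lemma hook_uniq i0 j0 j1 i1 : j0 <= j1 -> uniq (hook i0 j0 j1 i1).
Proof.
move=> le_j; rewrite map_inj_in_uniq ?iota_uniq // => k1 k2; rewrite !mem_iota /hook_pt.
by case: ifP; case: ifP => ? ? /andP[_ ?] /andP[_ ?] [] *; lia.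
Qed.

Lemma hook_pt_bounds i0 j0 j1 i1 k : i0 <= i1 -> j0 <= j1 ->
  k < j1 - j0 + 1 + (i1 - i0) ->
  [/\ (hook_pt i0 j0 j1 k).1 <= i1, (hook_pt i0 j0 j1 k).2 <= j1 &
      (hook_pt i0 j0 j1 k).1 + (hook_pt i0 j0 j1 k).2 = i0 + j0 + k].
Proof. by rewrite /hook_pt; case: ifP => /= *; split; lia. Qed.

Lemma hook_pt_step i0 j0 j1 k : j0 <= j1 ->
  hook_pt i0 j0 j1 k.+1 = ((hook_pt i0 j0 j1 k).1, (hook_pt i0 j0 j1 k).2.+1) \/
  hook_pt i0 j0 j1 k.+1 = ((hook_pt i0 j0 j1 k).1.+1, (hook_pt i0 j0 j1 k).2).
Proof.
move=> le_j; rewrite /hook_pt; case: ifP => ?; case: ifP => ? /=;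
  first [by left; congr pair; lia | by right; congr pair; lia | lia].
Qed.

Definition rect (a b : nat) : seq (nat * nat) := [seq (i, j) | i <- upto a, j <- upto b].
Definition rect_chains (a b : nat) : seq (seq (nat * nat)) :=
  [seq hook t 0 (b - t) a | t <- upto (minn a b)].

(* Each point (i, j) of the rectangle lies on the hook t = min i (b - j). *)
Lemma rect_chains_perm a b : perm_eq (flatten (rect_chains a b)) (rect a b).
Proof.
have mem_rect x : (x \in rect a b) = (x.1 <= a) && (x.2 <= b).
  case: x => i j; apply/allpairsP/idP => [[[i' j'] []] | ij].
    by rewrite /= !mem_upto => ? ? [-> ->]; apply/andP.
  by exists (i, j); rewrite /= !mem_upto; case/andP: ij.
apply: (perm_flatten_fibres (key := fun x => minn x.1 (b - x.2))).
- exact: upto_uniq.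
- apply: allpairs_uniq; [exact: upto_uniq | exact: upto_uniq |].
  by move=> [? ?] [? ?] _ _ [-> ->].
- by move=> t _; apply: hook_uniq; lia.
- move=> t x; rewrite mem_upto mem_rect => t_le.
  by rewrite mem_hook; [apply/idP/idP; lia | lia | lia].
- by move=> x; rewrite mem_rect mem_upto; lia.
Qed.

Definition tri (m : nat) : seq (nat * nat) := [seq x <- rect m m | x.1 <= x.2].
Definition tri_chains (m : nat) : seq (seq (nat * nat)) :=
  [seq hook t t (m - t) (m - t) | t <- upto m./2].

Lemma mem_tri m x : (x \in tri m) = (x.1 <= x.2 <= m).
Proof.
rewrite mem_filter; case: x => i j /=; apply/andP/idP => [[ij /allpairsP] | ij].
  by case=> [[i' j'] [/=]]; rewrite !mem_upto => ? ? [ei ej]; subst; lia.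
split; first by lia.
by apply/allpairsP; exists (i, j); rewrite /= !mem_upto; split => //; lia.
Qed.

Lemma tri_uniq m : uniq (tri m).
Proof.
apply/filter_uniq/allpairs_uniq; [exact: upto_uniq | exact: upto_uniq |].
by move=> [? ?] [? ?] _ _ [-> ->].
Qed.

(* Each point (p, q) of the triangle lies on the hook t = min p (m - q). *)
Lemma tri_chains_perm m : perm_eq (flatten (tri_chains m)) (tri m).
Proof.
apply: (perm_flatten_fibres (key := fun x => minn x.1 (m - x.2))).
- exact: upto_uniq.
- exact: tri_uniq.
- by move=> t; rewrite mem_upto => t_le; apply: hook_uniq; lia.
- move=> t x; rewrite mem_upto mem_tri => t_le.
  by rewrite mem_hook; [apply/idP/idP; lia | lia | lia].
- by move=> x; rewrite mem_tri mem_upto; lia.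
Qed.

Definition sym_chain (T : Type) (r : T -> nat) (cov : rel T) (N : nat) (c : seq T) : Prop :=
  exists r0, [/\ 0 < size c, r0 + r0 + (size c).-1 = N,
    forall x0 i, i < size c -> r (nth x0 c i) = r0 + i &
    forall x0 i, i.+1 < size c -> cov (nth x0 c i) (nth x0 c i.+1)].

Definition scd (T : eqType) (r : T -> nat) (cov : rel T) (N : nat) (D : seq T)
    (cs : seq (seq T)) : Prop :=
  (forall c, c \in cs -> sym_chain r cov N c) /\ perm_eq (flatten cs) D.

Lemma sym_chain_size (T : Type) (r : T -> nat) cov N c :
  sym_chain r cov N c -> 0 < size c.
Proof. by case=> ? []. Qed.

Definition rank_pair (T1 T2 : Type) (r1 : T1 -> nat) (r2 : T2 -> nat) (u : T1 * T2) : nat :=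
  r1 u.1 + r2 u.2.
Definition cover_pair (T1 T2 : eqType) (cov1 : rel T1) (cov2 : rel T2) : rel (T1 * T2) :=
  fun u v => (cov1 u.1 v.1 && (u.2 == v.2)) || ((u.1 == v.1) && cov2 u.2 v.2).

Section Pairs.
Variables (T1 T2 : eqType) (r1 : T1 -> nat) (r2 : T2 -> nat)
  (cov1 : rel T1) (cov2 : rel T2) (x1 : T1) (x2 : T2).

Local Notation rank12 := (rank_pair r1 r2).
Local Notation cover12 := (cover_pair cov1 cov2).

Definition pair_at (c1 : seq T1) (c2 : seq T2) (p : nat * nat) : T1 * T2 :=
  (nth x1 c1 p.1, nth x2 c2 p.2).

Lemma hook_sym_chain N1 N2 c1 c2 i0 j0 j1 i1 :
  sym_chain r1 cov1 N1 c1 -> sym_chain r2 cov2 N2 c2 ->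
  i0 <= i1 < size c1 -> j0 <= j1 < size c2 ->
  i0 + j0 + i1 + j1 = (size c1).-1 + (size c2).-1 ->
  sym_chain rank12 cover12 (N1 + N2) (map (pair_at c1 c2) (hook i0 j0 j1 i1)).
Proof.
move=> [r01 [s1 e1 R1 C1]] [r02 [s2 e2 R2 C2]] /andP[le_i lt_i] /andP[le_j lt_j] sym.
exists (r01 + r02 + i0 + j0); rewrite size_map size_hook //; split; try lia.
- move=> y0 k hk; rewrite (nth_map (0, 0)) ?nth_hook ?size_hook //.
  have [b1 b2 sum] := hook_pt_bounds le_i le_j hk.
  by rewrite /rank_pair /pair_at /= R1 ?R2; lia.
- move=> y0 k hk; rewrite !(nth_map (0, 0)) ?nth_hook ?size_hook //; try lia.
  have [b1 b2 _] := hook_pt_bounds le_i le_j hk.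
  move: b1 b2; rewrite /cover_pair /pair_at.
  case: (hook_pt_step i0 k le_j) => -> /= b1 b2.
  + by rewrite eqxx /=; apply/orP; right; apply: C2; lia.
  + by apply/orP; left; rewrite eqxx andbT; apply: C1; lia.
Qed.

Definition grid_chains (c1 : seq T1) (c2 : seq T2) : seq (seq (T1 * T2)) :=
  map (map (pair_at c1 c2)) (rect_chains (size c1).-1 (size c2).-1).

Lemma grid_sym_chain N1 N2 c1 c2 :
  sym_chain r1 cov1 N1 c1 -> sym_chain r2 cov2 N2 c2 ->
  forall c, c \in grid_chains c1 c2 -> sym_chain rank12 cover12 (N1 + N2) c.
Proof.
move=> h1 h2 c /mapP[_ /mapP[t + ->] ->]; rewrite mem_upto => t_le.
have := sym_chain_size h1; have := sym_chain_size h2.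
by move=> *; apply: hook_sym_chain => //; lia.
Qed.

Lemma grid_perm c1 c2 : 0 < size c1 -> 0 < size c2 ->
  perm_eq (flatten (grid_chains c1 c2)) [seq (x, y) | x <- c1, y <- c2].
Proof.
move=> s1 s2; rewrite /grid_chains -map_flatten.
apply: (perm_trans (perm_map _ (rect_chains_perm _ _))).
rewrite /rect map_allpairs -{3}(map_nth_upto x1 s1) -{3}(map_nth_upto x2 s2).
by rewrite allpairs_mapl allpairs_mapr.
Qed.

Lemma grid_row_perm c1 cs2 : 0 < size c1 -> (forall c2, c2 \in cs2 -> 0 < size c2) ->
  perm_eq (flatten (flatten (map (grid_chains c1) cs2)))
          [seq (x, y) | x <- c1, y <- flatten cs2].
Proof.
move=> s1; elim: cs2 => [|c2 cs2 IH] s2 /=; first by elim: c1 {s1}.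
rewrite flatten_cat perm_sym.
rewrite (perm_allpairs_catr pair c1 (fun=> c2) (fun=> flatten cs2)) perm_sym.
rewrite perm_cat ?grid_perm ?s2 ?mem_head // IH // => c cin.
by apply: s2; rewrite inE cin orbT.
Qed.

Definition prod_chains (cs1 : seq (seq T1)) (cs2 : seq (seq T2)) : seq (seq (T1 * T2)) :=
  flatten [seq grid_chains c1 c2 | c1 <- cs1, c2 <- cs2].

Lemma prod_scd N1 N2 D1 D2 cs1 cs2 :
  scd r1 cov1 N1 D1 cs1 -> scd r2 cov2 N2 D2 cs2 ->
  scd rank12 cover12 (N1 + N2) [seq (x, y) | x <- D1, y <- D2] (prod_chains cs1 cs2).
Proof.
move=> [sym1 perm1] [sym2 perm2]; split.
  move=> c /flattenP[cc /allpairsP[[c1 c2] [/= c1in c2in ->]]].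
  exact: grid_sym_chain (sym1 _ c1in) (sym2 _ c2in) c.
apply: (perm_trans _ (perm_allpairs _ perm1 perm2)).
have size2 c : c \in cs2 -> 0 < size c by move/sym2/sym_chain_size.
rewrite /prod_chains; elim: cs1 {perm1} sym1 => [|c1 cs1 IH] sym1 //=.
rewrite allpairs_cat !flatten_cat perm_cat //.
  by apply: grid_row_perm => //; apply/sym_chain_size/sym1/mem_head.
by apply: IH => c cin; apply: sym1; rewrite inE cin orbT.
Qed.
End Pairs.

Section HalfSquare.
Variables (T : eqType) (r : T -> nat) (cov : rel T) (x0 : T).

Local Notation rank2 := (rank_pair r r).
Local Notation cover2 := (cover_pair cov cov).
Local Notation pair_in c := (pair_at x0 x0 c c).

Definition tri_pairs (c : seq T) : seq (T * T) := map (pair_in c) (tri (size c).-1).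
Definition tri_pair_chains (c : seq T) : seq (seq (T * T)) :=
  map (map (pair_in c)) (tri_chains (size c).-1).

Lemma tri_sym_chain N c : sym_chain r cov N c ->
  forall c', c' \in tri_pair_chains c -> sym_chain rank2 cover2 (N + N) c'.
Proof.
move=> h c' /mapP[_ /mapP[t + ->] ->]; rewrite mem_upto => t_le.
by have := sym_chain_size h => *; apply: hook_sym_chain => //; lia.
Qed.

Lemma tri_pairs_perm c : perm_eq (flatten (tri_pair_chains c)) (tri_pairs c).
Proof. by rewrite /tri_pair_chains -map_flatten; apply/perm_map/tri_chains_perm. Qed.

Lemma mem_tri_pairs c x y : 0 < size c -> uniq c -> (x, y) \in tri_pairs c ->
  [/\ x \in c, y \in c & index x c <= index y c].
Proof.
move=> c_gt0 uc /mapP[[p q]]; rewrite mem_tri /pair_at /= => pq [-> ->].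
have [p_lt q_lt] : p < size c /\ q < size c by split; lia.
by rewrite !mem_nth // !index_uniq //; case/andP: pq.
Qed.

Lemma tri_pairs_total c x y : x \in c -> y \in c -> index x c <= index y c ->
  (x, y) \in tri_pairs c.
Proof.
move=> xc yc le_xy; apply/mapP; exists (index x c, index y c); last first.
  by rewrite /pair_at /= !nth_index.
by rewrite mem_tri le_xy /=; move: yc; rewrite -index_mem; lia.
Qed.

Lemma tri_pairs_uniq c : 0 < size c -> uniq c -> uniq (tri_pairs c).
Proof.
move=> c_gt0 uc; rewrite map_inj_in_uniq ?tri_uniq // => -[p q] [p' q'].
rewrite !mem_tri /pair_at /= => pq pq' [/eqP eq1 /eqP eq2].
rewrite (nth_uniq x0 _ _ uc) in eq1; try lia.
rewrite (nth_uniq x0 _ _ uc) in eq2; try lia.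
by rewrite (eqP eq1) (eqP eq2).
Qed.

(* If the chains cs list the elements x_1, x_2, ... of a set in this order, the
   "half square" is the list of pairs (x_i, x_j) with i <= j. *)
Fixpoint half_square_chains (cs : seq (seq T)) : seq (seq (T * T)) :=
  if cs is c :: cs' then
    tri_pair_chains c ++ flatten (map (grid_chains x0 x0 c) cs') ++ half_square_chains cs'
  else [::].

Fixpoint half_square (cs : seq (seq T)) : seq (T * T) :=
  if cs is c :: cs' then
    tri_pairs c ++ [seq (x, y) | x <- c, y <- flatten cs'] ++ half_square cs'
  else [::].

Lemma half_square_scd N cs : (forall c, c \in cs -> sym_chain r cov N c) ->
  scd rank2 cover2 (N + N) (half_square cs) (half_square_chains cs).
Proof.
elim: cs => [|c cs IH] sym_cs; first by split.
have sym_c := sym_cs c (mem_head _ _).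
have {}sym_cs c' : c' \in cs -> sym_chain r cov N c'.
  by move=> c'in; apply: sym_cs; rewrite inE c'in orbT.
have [IHsym IHperm] := IH sym_cs; split.
  move=> c'; rewrite /= !mem_cat => /or3P[c'in | /flattenP[_ /mapP[c2 c2in ->] c'in] | c'in].
  - exact: tri_sym_chain sym_c _ c'in.
  - exact: grid_sym_chain sym_c (sym_cs _ c2in) _ c'in.
  - exact: IHsym.
rewrite /= !flatten_cat perm_cat ?tri_pairs_perm // perm_cat ?IHperm //.
apply: grid_row_perm; first exact: sym_chain_size sym_c.
by move=> c2 /sym_cs /sym_chain_size.
Qed.

Definition distinct_chains (cs : seq (seq T)) : Prop :=
  (forall c, c \in cs -> 0 < size c) /\ uniq (flatten cs).

Lemma distinct_chains_cons c cs : distinct_chains (c :: cs) ->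
  [/\ 0 < size c, uniq c, [predI c & flatten cs] =i pred0 & distinct_chains cs].
Proof.
case=> size_gt0; rewrite /= cat_uniq => /and3P[uc dis ucs]; split => //.
- exact/size_gt0/mem_head.
- by move=> x; rewrite !inE; apply/negP => /andP[xc xcs]; move/hasPn: dis => /(_ _ xcs); rewrite xc.
- by split=> // c' c'in; apply: size_gt0; rewrite inE c'in orbT.
Qed.

Lemma mem_half_square cs x y : distinct_chains cs ->
  (x, y) \in half_square cs -> x \in flatten cs /\ y \in flatten cs.
Proof.
elim: cs => [|c cs IH] // /distinct_chains_cons[c_gt0 uc _ dcs] /=.
rewrite !mem_cat => /or3P[xy | /allpairsP[[a b] [/= ha hb [-> ->]]] | xy].
- by case: (mem_tri_pairs c_gt0 uc xy) => -> -> _.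
- by rewrite ha hb orbT.
- by case: (IH dcs xy) => -> ->; rewrite !orbT.
Qed.

Lemma half_square_uniq cs : distinct_chains cs -> uniq (half_square cs).
Proof.
elim: cs => [|c cs IH] // /distinct_chains_cons[c_gt0 uc dis dcs] /=.
have notboth a : a \in c -> a \in flatten cs -> False.
  by move=> ac acs; have := dis a; rewrite !inE ac acs.
have [_ ucs] := dcs.
rewrite !cat_uniq tri_pairs_uniq // IH // allpairs_uniq //; last first.
  by move=> [? ?] [? ?] _ _ /= [-> ->].
rewrite !andbT /=; apply/andP; split.
  rewrite has_cat negb_or; apply/andP; split.
    apply/hasPn => -[a b] /allpairsP[[a' b'] [/= _ hb [_ ->]]].
    by apply/negP => /(mem_tri_pairs c_gt0 uc) [_ bc _]; apply: notboth bc hb.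
  apply/hasPn => -[a b] /(mem_half_square dcs) [ha _].
  by apply/negP => /(mem_tri_pairs c_gt0 uc) [ac _ _]; apply: notboth ac ha.
apply/hasPn => -[a b] /(mem_half_square dcs) [ha _].
by apply/negP => /allpairsP[[a' b'] [/= ha' _ [E _]]]; apply: (notboth a); rewrite // E.
Qed.

Lemma half_square_total cs x y : distinct_chains cs ->
  x \in flatten cs -> y \in flatten cs ->
  ((x, y) \in half_square cs) || ((y, x) \in half_square cs).
Proof.
elim: cs => [|c cs IH] // /distinct_chains_cons[_ _ _ dcs] /=.
rewrite !mem_cat => /orP[xc | xcs] /orP[yc | ycs].
- case: (leqP (index x c) (index y c)) => h; first by rewrite tri_pairs_total.
  by rewrite (tri_pairs_total yc xc) ?orbT //; lia.
- by rewrite (allpairs_f pair xc ycs) orbT.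
- by rewrite (allpairs_f pair yc xcs) !orbT.
- by case/orP: (IH dcs xcs ycs) => ->; rewrite !orbT.
Qed.

Lemma half_square_anti cs x y : distinct_chains cs ->
  (x, y) \in half_square cs -> (y, x) \in half_square cs -> x = y.
Proof.
elim: cs => [|c cs IH] // /distinct_chains_cons[c_gt0 uc dis dcs] /=.
have notboth a : a \in c -> a \in flatten cs -> False.
  by move=> ac acs; have := dis a; rewrite !inE ac acs.
rewrite !mem_cat => /or3P[xy | /allpairsP[[a b] [/= ha hb [-> ->]]] | xy].
- case: (mem_tri_pairs c_gt0 uc xy) => xc yc le_xy.
  case/or3P=> [yx | /allpairsP[[a b] [/= _ hb [_ ex]]] | yx].
  + case: (mem_tri_pairs c_gt0 uc yx) => _ _ le_yx.
    by rewrite -(nth_index x0 xc) -(nth_index x0 yc) (_ : index x c = index y c) //; lia.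
  + by case: (notboth x); rewrite // ex.
  + by case: (mem_half_square dcs yx) => _ /(notboth _ xc).
- case/or3P=> [yx | /allpairsP[[a' b'] [/= _ hb' [_ ex]]] | yx].
  + by case: (mem_tri_pairs c_gt0 uc yx) => /(notboth _) /(_ hb).
  + by case: (notboth a); rewrite // ex.
  + by case: (mem_half_square dcs yx) => _ /(notboth _ ha).
- have [xcs ycs] := mem_half_square dcs xy.
  case/or3P=> [yx | /allpairsP[[a' b'] [/= ha' _ [ey _]]] | yx].
  + by case: (mem_tri_pairs c_gt0 uc yx) => _ /(notboth _) /(_ xcs).
  + by case: (notboth y); rewrite // ey.
  + exact: IH.
Qed.
End HalfSquare.

Lemma scd_map (T T' : eqType) (r : T -> nat) (cov : rel T) N D cs
    (r' : T' -> nat) (cov' : rel T') (h : T -> T') :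
  scd r cov N D cs -> {in D, forall x, r' (h x) = r x} ->
  {in D &, forall x y, cov x y -> cov' (h x) (h y)} ->
  scd r' cov' N (map h D) (map (map h) cs).
Proof.
move=> [sym_cs perm_cs] h_rank h_cov; split; last first.
  by rewrite -map_flatten; apply: perm_map.
move=> _ /mapP[c cin ->].
have inD y : y \in c -> y \in D.
  by move=> yc; rewrite -(perm_mem perm_cs); apply/flattenP; exists c.
have [r0 [c_gt0 sym R C]] := sym_cs c cin.
case: c c_gt0 sym R C inD {cin} => // y c _ sym R C inD.
exists r0; split; rewrite ?size_map //.
- move=> x0 i lt_i; rewrite (nth_map y) // h_rank; first exact: R.
  exact/inD/mem_nth.
- move=> x0 i lt_i; rewrite !(nth_map y) //; last exact: ltnW.
  by apply: h_cov; [apply/inD/mem_nth/ltnW | apply/inD/mem_nth | apply: C].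
Qed.

Section BooleanLattice.
Variable T : finType.

Fixpoint subsets (s : seq T) : seq {set T} :=
  if s is x :: s' then subsets s' ++ map (fun S => x |: S) (subsets s') else [:: set0].

Definition set_cover : rel {set T} := fun S S' => (S \subset S') && (#|S'| == #|S|.+1).
Definition set_rank (S : {set T}) : nat := #|S|.

Lemma mem_subsets s S : (S \in subsets s) = (S \subset [set x | x \in s]).
Proof.
elim: s S => [|x s IH] S /=.
  rewrite inE; apply/eqP/idP => [->|h]; first exact: sub0set.
  by apply/eqP; rewrite -subset0; apply: (subset_trans h); apply/subsetP => i; rewrite inE.
rewrite mem_cat IH; apply/orP/idP.
  case=> [h | /mapP[S' h ->]].
    by apply: (subset_trans h); apply/subsetP => i; rewrite !inE => ->; rewrite orbT.
  rewrite IH in h; apply/subsetP => i; rewrite !inE => /orP[/eqP -> | hi].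
    by rewrite eqxx.
  by move/subsetP: h => /(_ _ hi); rewrite inE => ->; rewrite orbT.
move=> h; case: (boolP (x \in S)) => xS.
  right; apply/mapP; exists (S :\ x); last by rewrite setD1K.
  rewrite IH; apply/subsetP => i; rewrite !inE => /andP[ix iS].
  by move/subsetP: h => /(_ _ iS); rewrite !inE (negbTE ix).
left; apply/subsetP => i iS; move/subsetP: h => /(_ _ iS); rewrite !inE.
by case/orP => // /eqP E; move: xS; rewrite -E iS.
Qed.

Lemma notin_subsets x s S : x \notin s -> S \in subsets s -> x \notin S.
Proof.
by move=> xs; rewrite mem_subsets => /subsetP sub; apply/negP => /sub; rewrite inE (negbTE xs).
Qed.

Lemma subsets_uniq s : uniq s -> uniq (subsets s).
Proof.
elim: s => [|x s IH] //= /andP[xs us].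
rewrite cat_uniq IH // map_inj_in_uniq ?IH // ?andbT; last first.
  move=> S S' hS hS' E.
  by rewrite -(setU1K (notin_subsets xs hS)) -(setU1K (notin_subsets xs hS')) E.
apply/hasPn => _ /mapP[S hS ->]; apply/negP => /(notin_subsets xs).
by rewrite setU11.
Qed.

Definition bool_cover : rel bool := fun b b' => ~~ b && b'.

Lemma bool_scd : scd nat_of_bool bool_cover 1 [:: false; true] [:: [:: false; true]].
Proof.
split; last exact: perm_refl.
move=> c; rewrite inE => /eqP ->; exists 0; split => //.
  by move=> x0 [|[|i]].
by move=> x0 [|i].
Qed.

(* Boolean lattices have symmetric chain decompositions, by induction through
   B(x :: s) ~ 2 x B(s). *)
Lemma subsets_scd s : uniq s -> exists cs, scd set_rank set_cover (size s) (subsets s) cs.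
Proof.
elim: s => [|x s IH] /=.
  move=> _; exists [:: [:: set0]]; split; last exact: perm_refl.
  move=> c; rewrite inE => /eqP ->; exists 0; split => //.
  by move=> x0 [|i] //= _; rewrite /set_rank cards0.
case/andP=> xs us; have [cs scd_s] := IH us.
pose add_x (u : bool * {set T}) := if u.1 then x |: u.2 else u.2.
have -> : subsets s ++ map (fun S => x |: S) (subsets s) =
          map add_x [seq (b, Y) | b <- [:: false; true], Y <- subsets s].
  by rewrite /= cats0 map_cat -!map_comp; congr (_ ++ _); elim: (subsets s) => //= ? ? <-.
eexists; rewrite -add1n; apply: scd_map (prod_scd false set0 bool_scd scd_s) _ _.
  move=> _ /allpairsP[[b Y] [/= _ hY ->]].
  rewrite /add_x /set_rank /rank_pair /=; case: b => //=.
  by rewrite cardsU1 (notin_subsets xs hY).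
move=> u v hu hv; move/allpairsP: hu => [[b1 S1] [/= _ hS1 ->]].
move/allpairsP: hv => [[b2 S2] [/= _ hS2 ->]].
rewrite /cover_pair /bool_cover /add_x /set_cover /=.
case/orP => [/andP[/andP[/negbTE -> ->] /eqP <-] | /andP[/eqP <- /andP[sub /eqP c]]].
  by rewrite subsetUr cardsU1 (notin_subsets xs hS1) eqxx.
case: b1; rewrite /= ?sub ?c ?eqxx //.
apply/andP; split; first exact: setUS.
rewrite !cardsU1 (notin_subsets xs hS1) (notin_subsets xs hS2) /=; apply/eqP; lia.
Qed.

Lemma cover3 (u v : {set T} * {set T} * {set T}) :
  cover_pair (cover_pair set_cover set_cover) set_cover u v ->
  [/\ u.1.1 \subset v.1.1, u.1.2 \subset v.1.2, u.2 \subset v.2 &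
      #|v.1.1| + #|v.1.2| + #|v.2| = (#|u.1.1| + #|u.1.2| + #|u.2|).+1].
Proof.
case: u v => [[S1 S2] S3] [[S1' S2'] S3']; rewrite /cover_pair /set_cover /=.
case/orP=> [/andP[/orP[/andP[/andP[sub /eqP c] /eqP <-] | /andP[/eqP <- /andP[sub /eqP c]]] /eqP <-]
          | /andP[/eqP [<- <-] /andP[sub /eqP c]]];
  by rewrite ?subxx sub c ?addSn ?addnS.
Qed.
End BooleanLattice.
Arguments set_rank {T}.
Arguments set_cover {T}.

Section DisjointTranspositions.
Variable n : nat.
Implicit Types (s : seq ('I_n * 'I_n)) (i : 'I_n).

Definition tperm_points s : seq 'I_n := flatten [seq [:: p.1; p.2] | p <- s].

Lemma tperm_points_cons q s : tperm_points (q :: s) = q.1 :: q.2 :: tperm_points s.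
Proof. by []. Qed.

Lemma mem_tperm_points s i :
  (i \in tperm_points s) = (i \in map fst s) || (i \in map snd s).
Proof.
elim: s => [|q s IH] //=; rewrite tperm_points_cons !inE IH.
by case: (i == q.1); case: (i == q.2); rewrite ?orbT.
Qed.

Lemma prod_tperm_action s : uniq (tperm_points s) ->
  (forall p, p \in s -> (\prod_(q <- s) tperm q.1 q.2)%g p.1 = p.2 /\
                       (\prod_(q <- s) tperm q.1 q.2)%g p.2 = p.1) /\
  (forall i, i \notin tperm_points s -> (\prod_(q <- s) tperm q.1 q.2)%g i = i).
Proof.
elim: s => [|q s IH]; first by split => // i _; rewrite big_nil perm1.
rewrite tperm_points_cons !cons_uniq !inE negb_or => /and3P[/andP[_ q1s] q2s us].
have [IH1 IH2] := IH us; rewrite big_cons; split.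
  move=> p; rewrite inE => /orP[/eqP -> | ps]; first by rewrite !permM tpermL tpermR !IH2.
  have p1 : p.1 \in tperm_points s by rewrite mem_tperm_points map_f.
  have p2 : p.2 \in tperm_points s by rewrite mem_tperm_points map_f ?orbT.
  have ne x : x \in tperm_points s -> (q.1 != x) && (q.2 != x).
    by move=> xs; apply/andP; split; apply/negP => /eqP E; [move: q1s | move: q2s]; rewrite E xs.
  have [n11 n21] := andP (ne _ p1); have [n12 n22] := andP (ne _ p2).
  by rewrite !permM !tpermD //; apply: IH1.
move=> i; rewrite !inE !negb_or => /and3P[iq1 iq2 iS].
by rewrite permM tpermD ?IH2 // eq_sym.
Qed.

Lemma snd_notin_fst s : uniq (tperm_points s) -> forall p, p \in s -> p.2 \notin map fst s.
Proof.
elim: s => [|q s IH] //.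
rewrite tperm_points_cons !cons_uniq !inE negb_or.
case/and3P=> /andP[q12 q1s] q2s us p; rewrite inE => /orP[/eqP -> | ps].
  rewrite map_cons inE negb_or eq_sym q12 /=; apply: contra q2s.
  by rewrite mem_tperm_points => ->.
rewrite map_cons inE negb_or IH // andbT; apply/negP => /eqP E; move: q1s.
by rewrite -E mem_tperm_points (map_f snd ps) orbT.
Qed.

Section Product.
Variable s : seq ('I_n * 'I_n).
Hypothesis s_uniq : uniq (tperm_points s).

Local Notation rho := (\prod_(q <- s) tperm q.1 q.2)%g.

Definition first_points : {set 'I_n} := [set i | i \in map fst s].

Lemma prod_tperm_involutive : involutive rho.
Proof.
move=> i; have [swap fixed] := prod_tperm_action s_uniq.
case: (boolP (i \in tperm_points s)) => [| ni]; last by rewrite !fixed.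
rewrite mem_tperm_points => /orP[/mapP[p ps ->] | /mapP[p ps ->]].
  by case: (swap p ps) => -> ->.
by case: (swap p ps) => E1 E2; rewrite E2 E1.
Qed.

Lemma first_points_moved i : i \in first_points -> rho i \notin first_points.
Proof.
have [swap _] := prod_tperm_action s_uniq; rewrite !inE => /mapP[p ps ->].
by case: (swap p ps) => -> _; apply: snd_notin_fst.
Qed.

Lemma prod_tperm_fixed i : i \notin first_points -> rho i \notin first_points -> rho i = i.
Proof.
have [swap fixed] := prod_tperm_action s_uniq; rewrite !inE => i_first rhoi_first.
apply: fixed; rewrite mem_tperm_points negb_or i_first /=.
apply/negP => /mapP[p ps E]; move: rhoi_first; rewrite E.
by case: (swap p ps) => _ ->; rewrite map_f.
Qed.
End Product.
End DisjointTranspositions.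

Lemma SCO_of_scd (T : finType) (le : rel T) (r : T -> nat) N D cs :
  is_rank_function le r -> poset_rank r = N -> scd r (covers le) N D cs ->
  perm_eq D (enum T) -> SCO le.
Proof.
move=> r_rank <- [sym_cs perm_cs] perm_D; have [m _] := r_rank.
have cs_gt0 c : c \in cs -> 0 < size c by move/sym_cs/sym_chain_size.
exists r; split => //; exists [seq (head m c, behead c) | c <- cs]; split.
  apply/allP => -[x c] /mapP[[|y c'] /[dup] cin /cs_gt0 // _ [-> ->]].
  have [r0 [_ sym R C]] := sym_cs _ cin.
  rewrite /symmetric_chain /=; apply/andP; split; first by apply/(pathP y) => i /C.
  rewrite (last_nth y) (R y 0) // (R y (size c')) //.
  by apply/eqP; move: sym => /= <-; lia.
apply: perm_trans perm_D; apply: perm_trans perm_cs.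
suff -> : flatten [seq xc.1 :: xc.2 | xc <- [seq (head m c, behead c) | c <- cs]] =
          flatten cs by [].
elim: cs cs_gt0 {sym_cs} => [|c cs IH] //= cs_gt0.
rewrite IH => [|c' c'in]; last by apply: cs_gt0; rewrite inE c'in orbT.
by case: c cs_gt0 => [/(_ [::] (mem_head _ _)) | ].
Qed.

Section Quotient.
Variables (n : nat) (rho : {perm 'I_n}).
Hypothesis rhoK : involutive rho.

Local Notation G := [set 1%g; rho].
Local Notation QT := (BquotT G).
Local Notation qle := (@Bquot_le n G).
Implicit Types (A B : {set 'I_n}) (X Y : QT).

Definition rho_set (A : {set 'I_n}) : {set 'I_n} := (fun i : 'I_n => rho i) @: A.

Lemma mem_rho_set A i : (i \in rho_set A) = (rho i \in A).
Proof.
apply/imsetP/idP => [[j jA ->] | h]; first by rewrite rhoK.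
by exists (rho i); rewrite ?rhoK.
Qed.

Lemma rho_setK : involutive rho_set.
Proof. by move=> A; apply/setP => i; rewrite !mem_rho_set rhoK. Qed.

Lemma card_rho_set A : #|rho_set A| = #|A|.
Proof. by apply: card_imset; apply: perm_inj. Qed.

Lemma orbitE A : orbitB G A = [set A; rho_set A].
Proof.
have id_set (B : {set 'I_n}) : (fun i : 'I_n => (1 : {perm 'I_n})%g i) @: B = B.
  by apply/setP => i; apply/imsetP/idP => [[j jB ->] | iB]; [rewrite perm1 | exists i; rewrite ?perm1].
apply/setP => B; apply/imsetP/idP.
  by move=> [g]; rewrite !inE => /orP[/eqP -> | /eqP ->] ->; rewrite ?id_set eqxx ?orbT.
rewrite !inE => /orP[/eqP -> | /eqP ->]; last by exists rho; rewrite // !inE eqxx orbT.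
by exists 1%g; rewrite ?id_set // !inE eqxx.
Qed.

Lemma orbitB_is_orbit A : is_orbitB G (orbitB G A).
Proof. by apply/existsP; exists A. Qed.

Definition orbit_class (A : {set 'I_n}) : QT := Sub (orbitB G A) (orbitB_is_orbit A).

Lemma val_orbit_class A : val (orbit_class A) = [set A; rho_set A].
Proof. exact: orbitE. Qed.

Lemma class_members (X : QT) B : B \in val X -> val X = [set B; rho_set B].
Proof.
case: X => X /= /existsP[A /eqP ->]; rewrite orbitE !inE.
by case/orP=> /eqP ->; rewrite ?rho_setK 1?setUC.
Qed.

Lemma class_nonempty X : exists A, A \in val X.
Proof. by case: X => X /= /existsP[A /eqP ->]; exists A; rewrite orbitE !inE eqxx. Qed.

Lemma orbit_class_mem A : A \in val (orbit_class A).
Proof. by rewrite val_orbit_class !inE eqxx. Qed.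

Lemma class_eq (X Y : QT) B : B \in val X -> B \in val Y -> X = Y.
Proof. by move=> BX BY; apply: val_inj; rewrite (class_members BX) (class_members BY). Qed.

Lemma orbit_class_of (X : QT) B : B \in val X -> X = orbit_class B.
Proof. by move=> BX; apply: (class_eq BX); apply: orbit_class_mem. Qed.

Lemma orbit_class_rho A : orbit_class (rho_set A) = orbit_class A.
Proof.
by apply: (@class_eq _ _ (rho_set A)); rewrite ?orbit_class_mem // val_orbit_class !inE eqxx orbT.
Qed.

(* The rank of a class is the common cardinal of its members. *)
Definition class_rank (X : QT) : nat := \max_(B in val X) #|B|.

Lemma class_rank_mem (X : QT) B : B \in val X -> class_rank X = #|B|.
Proof.
move=> BX; apply/eqP; rewrite eqn_leq; apply/andP; split.
  apply/bigmax_leqP => C; rewrite (class_members BX) !inE => /orP[/eqP -> // | /eqP ->].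
  by rewrite card_rho_set.
by rewrite /class_rank (bigD1 B) //= leq_maxl.
Qed.

Lemma class_rank_orbit A : class_rank (orbit_class A) = #|A|.
Proof. exact/class_rank_mem/orbit_class_mem. Qed.

Lemma lt_class_rank X Y : plt qle X Y -> class_rank X < class_rank Y.
Proof.
case/andP => /existsP[A /andP[AX /existsP[B /andP[BY sub]]]] neXY.
rewrite (class_rank_mem AX) (class_rank_mem BY) ltn_neqAle subset_leq_card // andbT.
apply/negP => /eqP cardAB; move/negP: neXY; apply; apply/eqP.
have AB : A = B by apply/eqP; rewrite eqEcard sub cardAB leqnn.
by apply: (class_eq AX); rewrite AB.
Qed.

Lemma covers_class_rank X Y : covers qle X Y -> class_rank Y = (class_rank X).+1.
Proof.
case/andP => lt_XY no_mid; have := lt_class_rank lt_XY.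
case/andP: lt_XY => /existsP[A /andP[AX /existsP[B /andP[BY sub]]]] _.
rewrite (class_rank_mem AX) (class_rank_mem BY) => lt_AB.
apply/eqP; rewrite eqn_leq lt_AB andbT leqNgt; apply/negP => gap.
have /properP[_ [i iB iA]] : A \proper B by rewrite properEcard sub.
set C := i |: A; have cardC : #|C| = #|A|.+1 by rewrite cardsU1 iA.
move/negP: no_mid; apply; apply/existsP; exists (orbit_class C).
apply/andP; split; apply/andP; split.
- apply/existsP; exists A; rewrite AX /=; apply/existsP; exists C.
  by rewrite orbit_class_mem subsetUr.
- by apply/negP => /eqP E; move: (class_rank_orbit C); rewrite -E (class_rank_mem AX); lia.
- apply/existsP; exists C; rewrite orbit_class_mem /=; apply/existsP; exists B; rewrite BY.
  by apply/subsetP => j; rewrite !inE => /orP[/eqP -> // | /(subsetP sub)].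
- by apply/negP => /eqP E; move: (class_rank_orbit C); rewrite E (class_rank_mem BY); lia.
Qed.

Lemma covers_orbit_class A B : A \subset B -> #|B| = #|A|.+1 ->
  covers qle (orbit_class A) (orbit_class B).
Proof.
move=> sub cardB; apply/andP; split.
  apply/andP; split.
    apply/existsP; exists A; rewrite orbit_class_mem /=.
    by apply/existsP; exists B; rewrite orbit_class_mem.
  by apply/negP => /eqP E; move: (class_rank_orbit A); rewrite E class_rank_orbit cardB; lia.
apply/negP => /existsP[Z /andP[/lt_class_rank lt1 /lt_class_rank lt2]].
by move: lt1 lt2; rewrite !class_rank_orbit cardB; lia.
Qed.

Lemma class_rank_function : is_rank_function qle class_rank.
Proof.
exists (orbit_class set0); split.
  move=> Y; have [B BY] := class_nonempty Y.
  apply/existsP; exists set0; rewrite orbit_class_mem /=.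
  by apply/existsP; exists B; rewrite BY sub0set.
have rank_last (p : seq QT) m :
    path (covers qle) m p -> class_rank (last m p) = class_rank m + size p.
  elim: p m => [|y p IH] m /=; first by rewrite addn0.
  by case/andP => cov_my path_p; rewrite IH // (covers_class_rank cov_my) addnS addSn.
by move=> x p path_p <-; rewrite rank_last // class_rank_orbit cards0.
Qed.

Lemma poset_rank_class : poset_rank class_rank = n.
Proof.
apply/eqP; rewrite eqn_leq; apply/andP; split.
  apply/bigmax_leqP => X _; have [A AX] := class_nonempty X.
  by rewrite (class_rank_mem AX); apply: leq_trans (max_card _) _; rewrite card_ord.
apply: (leq_trans _ (leq_bigmax (orbit_class setT))).
by rewrite class_rank_orbit cardsT card_ord.
Qed.
End Quotient.

Section Coordinates.
Variables (n : nat) (rho : {perm 'I_n}) (A : {set 'I_n}).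
Hypotheses (rhoK : involutive rho)
  (A_moved : forall i, i \in A -> rho i \notin A)
  (rho_fixed : forall i, i \notin A -> rho i \notin A -> rho i = i).

Local Notation rho_set := (rho_set rho).
Implicit Types (S T W U : {set 'I_n}).

(* The fixed points of rho: [n] is the disjoint union of A, rho A and F. *)
Definition fixed_part : {set 'I_n} := [set i | (i \notin A) && (rho i \notin A)].
Local Notation F := fixed_part.

Lemma fixed_partP i : i \in F -> rho i = i.
Proof. by rewrite inE => /andP[]; apply: rho_fixed. Qed.

(* The subset of [n] with coordinates S, T, W in B(A) x B(A) x B(F). *)
Definition glue (S T W : {set 'I_n}) : {set 'I_n} := S :|: rho_set T :|: W.

Lemma glue_sub S T W S' T' W' : S \subset S' -> T \subset T' -> W \subset W' ->
  glue S T W \subset glue S' T' W'.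
Proof. by move=> *; rewrite /glue !setUSS // imsetS. Qed.

Lemma glue_coords U : glue (U :&: A) (rho_set (U :&: rho_set A)) (U :&: F) = U.
Proof.
apply/setP => i; rewrite /glue (rho_setK rhoK) !in_setU !in_setI !(mem_rho_set rhoK) !inE.
by case: (i \in U); case: (i \in A); case: (rho i \in A).
Qed.

Lemma mem_glue S T W i : (i \in glue S T W) = [|| i \in S, rho i \in T | i \in W].
Proof. by rewrite !in_setU (mem_rho_set rhoK); case: (i \in S). Qed.

Lemma rho_glue S T W : W \subset F -> rho_set (glue S T W) = glue T S W.
Proof.
move=> sub_W; apply/setP => i; rewrite (mem_rho_set rhoK) mem_glue rhoK !in_setU (mem_rho_set rhoK).
case: (boolP (i \in W)) => iW; first by rewrite (fixed_partP (subsetP sub_W _ iW)) iW !orbT.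
case: (boolP (rho i \in W)) => riW; last by rewrite !orbF orbC.
have := fixed_partP (subsetP sub_W _ riW); rewrite rhoK => ri_i.
by move: iW; rewrite ri_i riW.
Qed.

Section Parts.
Variables (S T W : {set 'I_n}).
Hypotheses (sub_S : S \subset A) (sub_T : T \subset A) (sub_W : W \subset F).

Lemma glue_coord1 : glue S T W :&: A = S.
Proof.
apply/setP => i; rewrite inE mem_glue.
case: (boolP (i \in S)) => [/(subsetP sub_S) -> // | iS] /=.
case: (boolP (i \in A)) => iA; rewrite ?andbF //= andbT.
apply/negP => /orP[/(subsetP sub_T) | /(subsetP sub_W)]; first by apply/negP/A_moved.
by rewrite inE iA.
Qed.

Lemma glue_coord2 : rho_set (glue S T W :&: rho_set A) = T.
Proof.
apply/setP => i; rewrite (mem_rho_set rhoK) inE (mem_rho_set rhoK) mem_glue rhoK.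
case: (boolP (i \in A)) => iA; rewrite ?andbF ?andbT.
  case: (boolP (i \in T)) => iT; rewrite ?orbT //=.
  apply/negbTE/negP => /orP[/(subsetP sub_S) | /(subsetP sub_W)]; first exact/negP/A_moved.
  by rewrite inE rhoK iA andbF.
by apply/esym/negP => /(subsetP sub_T); rewrite (negbTE iA).
Qed.

Lemma glue_coord3 : glue S T W :&: F = W.
Proof.
apply/setP => i; rewrite inE mem_glue.
case: (boolP (i \in W)) => iW; rewrite ?orbT; first by rewrite (subsetP sub_W).
rewrite orbF inE; apply/negP => /andP[/orP[/(subsetP sub_S) -> | /(subsetP sub_T) ->]] //.
by rewrite andbF.
Qed.

Lemma card_glue : #|glue S T W| = #|S| + #|T| + #|W|.
Proof.
have card_disjoint (X Y : {set 'I_n}) : {in X, forall i, i \notin Y} -> #|X :|: Y| = #|X| + #|Y|.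
  move=> XnotY; apply/eqP; rewrite (leq_card_setU X Y).2 disjoints_subset.
  by apply/subsetP => i /XnotY; rewrite inE.
rewrite /glue card_disjoint; last first.
  move=> i; rewrite in_setU (mem_rho_set rhoK) => /orP[/(subsetP sub_S) iA | /(subsetP sub_T) riA].
    by apply/negP => /(subsetP sub_W); rewrite inE iA.
  by apply/negP => /(subsetP sub_W); rewrite inE riA andbF.
rewrite card_disjoint ?card_rho_set // => i /(subsetP sub_S) /A_moved.
by rewrite (mem_rho_set rhoK); apply: contra => /(subsetP sub_T).
Qed.
End Parts.

Lemma card_parts : #|A| + #|A| + #|F| = n.
Proof.
have := glue_coords setT; rewrite !setTI (rho_setK rhoK) => glue_full.
by rewrite -card_glue ?subxx // glue_full cardsT card_ord.
Qed.

Lemma glue_inj S T W S' T' W' :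
  S \subset A -> T \subset A -> W \subset F ->
  S' \subset A -> T' \subset A -> W' \subset F ->
  glue S T W = glue S' T' W' -> (S, T, W) = (S', T', W').
Proof.
move=> sS sT sW sS' sT' sW' eq_glue.
have := glue_coord1 sS sT sW; have := glue_coord2 sS sT sW; have := glue_coord3 sS sT sW.
by rewrite eq_glue glue_coord1 // glue_coord2 // glue_coord3 // => -> -> ->.
Qed.

Local Notation QT := (BquotT [set 1%g; rho]).
Local Notation qle := (@Bquot_le n [set 1%g; rho]).

Definition glue_class (u : {set 'I_n} * {set 'I_n} * {set 'I_n}) : QT :=
  orbit_class rho (glue u.1.1 u.1.2 u.2).

Section Representatives.
Variable csA : seq (seq {set 'I_n}).
Hypotheses (csA_distinct : distinct_chains csA)
  (csA_subsets : perm_eq (flatten csA) (subsets (enum A))).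

(* Coordinates of one representative of each class: its first two coordinates
   are ordered along the chains csA, as in the half square. *)
Definition reps : seq ({set 'I_n} * {set 'I_n} * {set 'I_n}) :=
  [seq (x, y) | x <- half_square set0 csA, y <- subsets (enum F)].

Lemma mem_chainsA S : (S \in flatten csA) = (S \subset A).
Proof. by rewrite (perm_mem csA_subsets) mem_subsets set_enum. Qed.

Lemma mem_subsetsF W : (W \in subsets (enum F)) = (W \subset F).
Proof. by rewrite mem_subsets set_enum. Qed.

Lemma reps_parts u : u \in reps -> [/\ u.1.1 \subset A, u.1.2 \subset A & u.2 \subset F].
Proof.
case/allpairsP=> [[[S T] W] [/= /(mem_half_square csA_distinct)[]]].
by rewrite !mem_chainsA mem_subsetsF => sS sT sW ->.
Qed.

Lemma reps_half u : u \in reps -> u.1 \in half_square set0 csA.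
Proof. by case/allpairsP=> [[? ?] [/= ? _ ->]]. Qed.

Lemma reps_uniq : uniq reps.
Proof.
apply: allpairs_uniq; [exact: half_square_uniq | exact/subsets_uniq/enum_uniq |].
by move=> [? ?] [? ?] _ _ [-> ->].
Qed.

Lemma glue_class_rank u : u \in reps ->
  class_rank (glue_class u) = rank_pair (rank_pair set_rank set_rank) set_rank u.
Proof.
by case/reps_parts => sS sT sW; rewrite class_rank_orbit ?card_glue.
Qed.

Lemma glue_class_cover u v : u \in reps -> v \in reps ->
  cover_pair (cover_pair set_cover set_cover) set_cover u v ->
  covers qle (glue_class u) (glue_class v).
Proof.
move=> /reps_parts[sS sT sW] /reps_parts[sS' sT' sW'] /cover3[sub1 sub2 sub3 card_uv].
rewrite /glue_class; apply: (covers_orbit_class rhoK); first exact: glue_sub.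
by rewrite !card_glue.
Qed.

Lemma glue_class_inj : {in reps &, injective glue_class}.
Proof.
move=> [[S T] W] [[S' T'] W'] u_reps v_reps eq_uv.
have [/= sS sT sW] := reps_parts u_reps; have [/= sS' sT' sW'] := reps_parts v_reps.
have : glue S' T' W' \in val (glue_class ((S, T), W)).
  by rewrite eq_uv orbit_class_mem.
rewrite val_orbit_class !inE (rho_glue S T sW) => /orP[] /eqP /esym eq_glue.
  exact: glue_inj sS sT sW sS' sT' sW' eq_glue.
move: v_reps; case: (glue_inj sT sS sW sS' sT' sW' eq_glue) => <- <- <- v_reps.
by rewrite (half_square_anti csA_distinct (reps_half u_reps) (reps_half v_reps)).
Qed.

(* ... and every class has a representative: if (T, S) rather than (S, T) is
   in the half square, use rho U = glue T S W instead of U. *)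
Lemma glue_class_onto X : X \in map glue_class reps.
Proof.
have [U UX] := class_nonempty X; have -> := orbit_class_of rhoK UX.
set S := U :&: A; set T := rho_set (U :&: rho_set A); set W := U :&: F.
have sS : S \subset A by apply: subsetIr.
have sT : T \subset A.
  by apply/subsetP => i; rewrite (mem_rho_set rhoK) inE (mem_rho_set rhoK) rhoK => /andP[].
have sW : W \subset F by apply: subsetIr.
have glueU : glue S T W = U by apply: glue_coords.
have WF : W \in subsets (enum F) by rewrite mem_subsetsF.
have SA : S \in flatten csA by rewrite mem_chainsA.
have TA : T \in flatten csA by rewrite mem_chainsA.
have [ST | TS] := orP (half_square_total set0 csA_distinct SA TA).
  by apply/mapP; exists ((S, T), W); rewrite ?allpairs_f // /glue_class /= glueU.
apply/mapP; exists ((T, S), W); first exact: allpairs_f.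
by rewrite /glue_class /= -(rho_glue S T sW) glueU orbit_class_rho.
Qed.

Lemma reps_perm : perm_eq (map glue_class reps) (enum QT).
Proof.
apply: uniq_perm; first by rewrite map_inj_in_uniq ?reps_uniq //; exact: glue_class_inj.
  exact: enum_uniq.
by move=> X; rewrite mem_enum glue_class_onto.
Qed.
End Representatives.
End Coordinates.

Theorem theorem2p5 (n : nat) (rho : {perm 'I_n}) :
  disjoint_transpositions_product rho ->
  SCO (@Bquot_le n [set 1%g; rho]).
Proof.
case=> s [_ _ s_uniq ->]; set rho' := (\prod_(q <- s) _)%g; set A := first_points s.
have rhoK := prod_tperm_involutive s_uniq.
have A_moved := first_points_moved s_uniq.
have rho_fixed := prod_tperm_fixed s_uniq.
have [csA [symA permA]] := subsets_scd (enum_uniq (mem A)).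
have [csF scdF] := subsets_scd (enum_uniq (mem (fixed_part rho' A))).
have distA : distinct_chains csA.
  split; first by move=> c /symA /sym_chain_size.
  by rewrite (perm_uniq permA) subsets_uniq ?enum_uniq.
have := scd_map (prod_scd (set0, set0) set0 (half_square_scd set0 symA) scdF)
  (glue_class_rank rhoK A_moved distA permA) (glue_class_cover rhoK A_moved distA permA).
rewrite -!cardE (card_parts rhoK A_moved) => scd_classes.
exact: SCO_of_scd (class_rank_function rhoK) (poset_rank_class rhoK) scd_classes
  (reps_perm rhoK A_moved rho_fixed distA permA).
Qed.
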